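(* Let $(\pi_1,S_1,T_1,W_1)$ be a linearly minimal homomorphism dilation system of a linear system $(\varphi,\mathcal A,V)$, and let $(\pi_c,S_c,T_c,W_c)$ be the canonical dilation. (i) If $\ker S_1$ contains no nonzero $\pi_1(\mathcal A)$-invariant subspace, then $(\pi_1,S_1,T_1,W_1)$ is equivalent to the canonical dilation. (ii) If $\dim W_1<\infty$ and $\pi_1$ is equivalent to $\pi_c$, in the sense that there is a bijective linear map $R:W_1\to W_c$ with $\pi_c(a)R=R\pi_1(a)$ for all $a\in\mathcal A$, then $\ker S_1$ contains no nonzero $\pi_1(\mathcal A)$-invariant subspace.
   Context: Fix a field $\mathbb F$; all algebras and vector spaces are over $\mathbb F$, and $L(X)$ is the algebra of linear maps $X\to X$. A linear system $(\varphi,\mathcal A,V)$: $\mathcal A$ a unital associative algebra with unit $I$, $V$ a vector space, $\varphi:\mathcal A\to L(V)$ linear with $\varphi(I)=\mathrm{id}_V$. A homomorphism dilation system $(\pi,S,T,W)$: $W$ a vector space, $\pi:\mathcal A\to L(W)$ a unital homomorphism, $T:V\to W$ injective linear, $S:W\to V$ surjective linear, $\varphi(a)=S\pi(a)T$ for all $a$. It is linearly minimal if $W=\mathrm{span}\{\pi(a)Tv\}$. Two linearly minimal systems are equivalent if there is a bijective linear $R:W_1\to W_2$ with $RT_1=T_2$, $S_2R=S_1$, $\pi_1(a)=R^{-1}\pi_2(a)R$ for all $a$. Canonical dilation: $\alpha_{a,x}\in L(\mathcal A,V)$, $\alpha_{a,x}(b)=\varphi(ba)x$; $W_c=\mathrm{span}\{\alpha_{a,x}:a\in\mathcal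 A,x\in V\}$; $\pi_c(a)\alpha_{b,x}=\alpha_{ab,x}$; $T_cx=\alpha_{I,x}$; $S_c(\alpha_{a,x})=\varphi(a)x$. *)

From HB Require Import structures.
From mathcomp Require Import all_boot all_order all_algebra.
Set Implicit Arguments. Unset Strict Implicit. Unset Printing Implicit Defensive.
Import GRing.Theory.
Local Open Scope ring_scope.

Section Defs.
Variable F : fieldType.

Definition in_span (W : lmodType F) (P : W -> Prop) (w : W) : Prop :=
  exists n (c : 'I_n -> F) (u : 'I_n -> W),
    (forall i, P (u i)) /\ w = \sum_(i < n) c i *: u i.

Definition is_subspace (W : lmodType F) (U : W -> Prop) : Prop :=
  U 0 /\ forall (c : F) u v, U u -> U v -> U (c *: u + v).

Definition finite_dim (W : lmodType F) : Prop :=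
  exists n (u : 'I_n -> W), forall w, in_span (fun x => exists i, x = u i) w.

Definition linear_system (A : algType F) (V : lmodType F) (phi : A -> V -> V)
  : Prop :=
  [/\ (forall a, linear (phi a)),
      (forall (c : F) (a b : A) (x : V), phi (c *: a + b) x = c *: phi a x + phi b x)
    & (forall x, phi 1 x = x)].

Definition hom_dilation (A : algType F) (V W : lmodType F) (phi : A -> V -> V)
  (pi : A -> W -> W) (S : W -> V) (T : V -> W) : Prop :=
  [/\
      (forall a, linear (pi a)),
      (forall (c : F) (a b : A) (w : W), pi (c *: a + b) w = c *: pi a w + pi b w),
      (forall w, pi 1 w = w)
    & (forall (a b : A) (w : W), pi (a * b) w = pi a (pi b w))] /\
  [/\
      (linear T /\ injective T),
      (linear S /\ (forall v, exists w, S w = v))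
    & (forall a x, phi a x = S (pi a (T x)))].

Definition lin_minimal (A : algType F) (V W : lmodType F)
  (pi : A -> W -> W) (T : V -> W) : Prop :=
  forall w : W, in_span (fun u => exists a x, u = pi a (T x)) w.

Definition no_invariant_in_ker (A : algType F) (V W : lmodType F)
  (pi : A -> W -> W) (S : W -> V) : Prop :=
  forall U : W -> Prop, is_subspace U ->
    (forall a u, U u -> U (pi a u)) ->
    (forall u, U u -> S u = 0) ->
    forall u, U u -> u = 0.

(* ---- canonical dilation, inside L(A,V) represented as functions A -> V ---- *)

Definition alpha (A : algType F) (V : lmodType F) (phi : A -> V -> V)
  (a : A) (x : V) : A -> V := fun b => phi (b * a) x.

Definition in_Wc (A : algType F) (V : lmodType F) (phi : A -> V -> V)
  (f : A -> V) : Prop :=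
  exists n (c : 'I_n -> F) (a : 'I_n -> A) (x : 'I_n -> V),
    f = fun b => \sum_(i < n) c i *: alpha phi (a i) (x i) b.

(* pi_c(a) alpha_{b,x} = alpha_{ab,x}; on all of W_c this is f |-> (b |-> f (b a)) *)
Definition pi_c (A : algType F) (V : lmodType F) (a : A) (f : A -> V) : A -> V :=
  fun b => f (b * a).

Definition T_c (A : algType F) (V : lmodType F) (phi : A -> V -> V) (x : V)
  : A -> V := alpha phi 1 x.

(* S_c(alpha_{a,x}) = phi(a) x = alpha_{a,x}(I); on W_c this is f |-> f I *)
Definition S_c (A : algType F) (V : lmodType F) (f : A -> V) : V := f 1.

Definition lin_bij_onto_Wc (A : algType F) (V W : lmodType F)
  (phi : A -> V -> V) (R : W -> A -> V) : Prop :=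
  [/\ (forall (c : F) (u v : W), R (c *: u + v) = fun b => c *: R u b + R v b),
      (forall w, in_Wc phi (R w)),
      (forall f, in_Wc phi f -> exists w, R w = f)
    & injective R].

Definition equiv_to_canonical (A : algType F) (V W : lmodType F)
  (phi : A -> V -> V) (pi : A -> W -> W) (S : W -> V) (T : V -> W) : Prop :=
  exists R : W -> A -> V,
    [/\ lin_bij_onto_Wc phi R,
        (forall x, R (T x) = T_c phi x),
        (forall w, S_c (R w) = S w)
      & (forall a w, R (pi a w) = pi_c a (R w))].

Definition rep_equiv_to_canonical (A : algType F) (V W : lmodType F)
  (phi : A -> V -> V) (pi : A -> W -> W) : Prop :=
  exists R : W -> A -> V,
    lin_bij_onto_Wc phi R /\ (forall a w, pi_c a (R w) = R (pi a w)).

End Defs.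

(** The map [w |-> (b |-> S (pi b w))] sends [W] linearly onto [W_c], turns
    [T], [S], [pi] into [T_c], [S_c], [pi_c], and its kernel
    [{w | S (pi b w) = 0 for all b}] is the largest [pi]-invariant subspace
    of [ker S].  Hence it is an equivalence exactly when [ker S] contains no
    nonzero invariant subspace, which gives (i).  For (ii), composing it with
    the inverse of a linear bijection [W -> W_c] yields a surjective linear
    endomorphism of the finite-dimensional space [W]; such a map is injective
    (it is annihilated by the characteristic polynomial of a matrix
    representing it), so the kernel is trivial. *)

From HB Require Import structures.
From mathcomp Require Import all_boot all_order all_algebra.
From Stdlib Require Import FunctionalExtensionality IndefiniteDescription.
Set Implicit Arguments. Unset Strict Implicit. Unset Printing Implicit Defensive.
Import GRing.Theory.
Local Open Scope ring_scope.

Section LinearFunctions.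
Variables (F : fieldType) (U W : lmodType F) (f : U -> W).
Hypothesis f_linear : linear f.

Definition linear_of : {linear U -> W} :=
  HB.pack f (GRing.isLinear.Build F U W *:%R f f_linear).

Lemma linear_fun0 : f 0 = 0.
Proof. exact: (linear0 linear_of). Qed.

Lemma linear_funB u v : f (u - v) = f u - f v.
Proof. exact: (linearB linear_of). Qed.

Lemma linear_fun_sum n (c : 'I_n -> F) (u : 'I_n -> U) :
  f (\sum_(i < n) c i *: u i) = \sum_(i < n) c i *: f (u i).
Proof.
transitivity (linear_of (\sum_(i < n) c i *: u i)) => //.
by rewrite linear_sum; apply: eq_bigr => i _; rewrite linearZ.
Qed.

Lemma linear_fun_inj : (forall u, f u = 0 -> u = 0) -> injective f.
Proof. exact: (raddf_inj (f := linear_of)). Qed.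

End LinearFunctions.

Section Coordinates.
Variables (F : fieldType) (W : lmodType F) (n : nat) (u : 'I_n -> W).

Definition lin_comb (d : 'rV[F]_n) : W := \sum_(i < n) d 0 i *: u i.

Lemma lin_comb_linear : linear lin_comb.
Proof.
move=> c d e; rewrite /lin_comb scaler_sumr -big_split /=.
by apply: eq_bigr => i _; rewrite !mxE scalerDl scalerA.
Qed.

Lemma in_span_lin_comb w :
  in_span (fun x => exists i, x = u i) w -> exists d, w = lin_comb d.
Proof.
case=> m [c [v [v_gen ->]]]; have [k def_v] := fin_all_exists v_gen.
exists (\row_i \sum_(j < m | k j == i) c j).
rewrite /lin_comb (partition_big k xpredT) //=; apply: eq_bigr => i _.
by rewrite mxE scaler_suml; apply: eq_bigr => j /eqP <-; rewrite def_v.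
Qed.

End Coordinates.

Lemma horner_mx_coef (F : fieldType) n (N : 'M[F]_n.+1) (p : {poly F}) :
  horner_mx N p = \sum_(i < size p) p`_i *: N ^+ i.
Proof.
rewrite -{1}[p]coefK poly_def rmorph_sum; apply: eq_bigr => i _.
by rewrite -mul_polyC rmorphM /= horner_mx_C rmorphXn /= horner_mx_X -mul_scalar_mx.
Qed.

Section FiniteDimEndomorphism.
Variables (F : fieldType) (W : lmodType F) (g : W -> W).
Hypothesis g_linear : linear g.

Lemma iter_linear k : linear (iter k g).
Proof. by elim: k => [|k IHk] a u v //=; rewrite IHk g_linear. Qed.

Lemma endomorphism_matrix n (u : 'I_n -> W) :
  (forall w, in_span (fun x => exists i, x = u i) w) ->
  exists N : 'M[F]_n, forall d, g (lin_comb u d) = lin_comb u (d *m N).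
Proof.
move=> u_span.
have [D def_gu] := fin_all_exists (fun i => in_span_lin_comb (u_span (g (u i)))).
exists (\matrix_(i, j) D i 0 j) => d.
rewrite {1}/lin_comb (linear_fun_sum g_linear) mulmx_sum_row.
rewrite (linear_fun_sum (lin_comb_linear u)); apply: eq_bigr => i _.
by rewrite def_gu; congr (_ *: lin_comb u _); apply/rowP => j; rewrite !mxE.
Qed.

Lemma annihilating_poly : finite_dim W ->
  exists2 p : {poly F}, p != 0 & forall w, \sum_(i < size p) p`_i *: iter i g w = 0.
Proof.
case=> [[|n] [u u_span]].
  exists 1; first exact: oner_neq0.
  move=> w; have [d ->] := in_span_lin_comb (u_span w).
  rewrite /lin_comb big_ord0 big1 // => i _.
  by rewrite (linear_fun0 (iter_linear _)) scaler0.
have [N gN] := endomorphism_matrix u_span.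
exists (char_poly N); first exact/monic_neq0/char_poly_monic.
move=> w; have [d ->] := in_span_lin_comb (u_span w).
have iterN k : iter k g (lin_comb u d) = lin_comb u (d *m N ^+ k).
  by elim: k => [|k IHk]; rewrite ?mulmx1 //= IHk gN exprSr mulmxA.
under eq_bigr do rewrite iterN.
rewrite -(linear_fun_sum (lin_comb_linear u)).
under eq_bigr do rewrite scalemxAr.
rewrite -mulmx_sumr -horner_mx_coef Cayley_Hamilton mulmx0.
exact: linear_fun0 (lin_comb_linear u).
Qed.

Lemma annihilated_surjective_injective (p : {poly F}) : p != 0 ->
  (forall w, \sum_(i < size p) p`_i *: iter i g w = 0) ->
  (forall w, exists v, g v = w) -> injective g.
Proof.
move=> p_neq0 p_annih g_onto; apply: linear_fun_inj g_linear _ => w gw0.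
have p_coef : exists i, p`_i != 0.
  by exists (size p).-1; rewrite -lead_coefE lead_coef_eq0.
have [k pk_neq0 k_min] := ex_minnP p_coef.
have k_lt : (k < size p)%N.
  by rewrite ltnNge; apply: contra pk_neq0 => /(nth_default 0) ->.
have [v def_w] : exists v, iter k g v = w.
  elim: k {k_lt pk_neq0 k_min} => [|k IHk]; first by exists w.
  by have [v <-] := IHk; have [v' <-] := g_onto v; exists v'; rewrite /= -iterSr.
have := p_annih v; rewrite (bigD1 (Ordinal k_lt)) //= big1 ?addr0.
  by rewrite def_w => /eqP; rewrite scaler_eq0 (negbTE pk_neq0) => /eqP.
move=> i /eqP i_neq_k; have [lt_ik | le_ki] := ltnP i k.
  suff -> : p`_i = 0 by rewrite scale0r.
  by apply/eqP; apply: contraTT lt_ik => /k_min; rewrite leqNgt.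
have lt_ki : (k < i)%N.
  rewrite ltn_neqAle le_ki andbT; apply/eqP => eq_ki.
  by apply: i_neq_k; apply: val_inj; rewrite /= eq_ki.
rewrite -(subnK lt_ki) iterD iterS def_w gw0.
by rewrite (linear_fun0 (iter_linear _)) scaler0.
Qed.

Lemma finite_dim_surjective_injective :
  finite_dim W -> (forall w, exists v, g v = w) -> injective g.
Proof.
case/annihilating_poly=> p p_neq0 p_annih.
exact: annihilated_surjective_injective p_annih.
Qed.

End FiniteDimEndomorphism.

Section CanonicalMap.
Variables (F : fieldType) (A : algType F) (V W : lmodType F).
Variables (phi : A -> V -> V) (pi : A -> W -> W) (S : W -> V) (T : V -> W).
Hypotheses (pi_linear : forall a, linear (pi a)) (pi1 : forall w, pi 1 w = w).
Hypothesis piM : forall a b w, pi (a * b) w = pi a (pi b w).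
Hypothesis S_linear : linear S.
Hypothesis phi_compression : forall a x, phi a x = S (pi a (T x)).

Definition canonical_map (w : W) : A -> V := fun b => S (pi b w).

Lemma canonical_map_linear c u v :
  canonical_map (c *: u + v) = fun b => c *: canonical_map u b + canonical_map v b.
Proof.
by apply: functional_extensionality => b; rewrite /canonical_map pi_linear S_linear.
Qed.

Lemma canonical_map_span n (c : 'I_n -> F) (a : 'I_n -> A) (x : 'I_n -> V) :
  canonical_map (\sum_(i < n) c i *: pi (a i) (T (x i)))
  = fun b => \sum_(i < n) c i *: alpha phi (a i) (x i) b.
Proof.
apply: functional_extensionality => b.
rewrite /canonical_map (linear_fun_sum (pi_linear b)) (linear_fun_sum S_linear).
by apply: eq_bigr => i _; rewrite /alpha -piM phi_compression.
Qed.

Lemma canonical_map_in_Wc : lin_minimal pi T -> forall w, in_Wc phi (canonical_map w).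
Proof.
move=> T_min w; have [n [c [u [u_gen ->]]]] := T_min w.
have /fin_all_exists[ax def_u] : forall i, exists ax : A * V, u i = pi ax.1 (T ax.2).
  by move=> i; have [a [x ->]] := u_gen i; exists (a, x).
exists n, c, (fun i => (ax i).1), (fun i => (ax i).2).
by rewrite -canonical_map_span; under eq_bigr do rewrite def_u.
Qed.

Lemma canonical_map_onto f : in_Wc phi f -> exists w, canonical_map w = f.
Proof.
case=> n [c [a [x ->]]].
by exists (\sum_(i < n) c i *: pi (a i) (T (x i))); rewrite canonical_map_span.
Qed.

Lemma canonical_map_T x : canonical_map (T x) = T_c phi x.
Proof.
apply: functional_extensionality => b.
by rewrite /canonical_map /T_c /alpha mulr1 phi_compression.
Qed.

Lemma canonical_map_S w : S_c (canonical_map w) = S w.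
Proof. by rewrite /S_c /canonical_map pi1. Qed.

Lemma canonical_map_pi a w : canonical_map (pi a w) = pi_c a (canonical_map w).
Proof. by apply: functional_extensionality => b; rewrite /pi_c /canonical_map piM. Qed.

Lemma canonical_map_injective : no_invariant_in_ker pi S -> injective canonical_map.
Proof.
move=> no_inv u v eq_uv; apply/eqP; rewrite -subr_eq0; apply/eqP.
pose K w := forall b, S (pi b w) = 0.
apply: (no_inv K).
- split=> [b | c w1 w2 Kw1 Kw2 b].
    by rewrite (linear_fun0 (pi_linear b)) (linear_fun0 S_linear).
  by rewrite pi_linear S_linear Kw1 Kw2 scaler0 addr0.
- by move=> a w Kw b; rewrite -piM.
- by move=> w /(_ 1); rewrite pi1.
- move=> b; rewrite (linear_funB (pi_linear b)) (linear_funB S_linear).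
  by have := congr1 (fun f => f b) eq_uv; rewrite /canonical_map => ->; rewrite subrr.
Qed.

Lemma no_invariant_in_ker_of_injective :
  injective canonical_map -> no_invariant_in_ker pi S.
Proof.
move=> inj_map U _ U_inv U_ker u Uu; apply: inj_map.
apply: functional_extensionality => b; rewrite /canonical_map U_ker; last exact: U_inv.
by rewrite (linear_fun0 (pi_linear b)) (linear_fun0 S_linear).
Qed.

Lemma canonical_map_injective_finite_dim : lin_minimal pi T -> finite_dim W ->
  (exists R : W -> A -> V, lin_bij_onto_Wc phi R) -> injective canonical_map.
Proof.
move=> T_min W_fin [R [R_lin R_in R_onto R_inj]].
have [g def_g] : exists g : W -> W, forall w, R (g w) = canonical_map w.
  apply: (functional_choice (fun w w' => R w' = canonical_map w)) => w.
  exact/R_onto/canonical_map_in_Wc.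
have g_linear : linear g.
  by move=> c u v; apply: R_inj; rewrite R_lin !def_g canonical_map_linear.
have g_onto w : exists v, g v = w.
  have [v def_v] := canonical_map_onto (R_in w).
  by exists v; apply: R_inj; rewrite def_g.
move=> u v eq_uv; apply: (finite_dim_surjective_injective g_linear W_fin g_onto).
by apply: R_inj; rewrite !def_g.
Qed.

End CanonicalMap.

Theorem corollary3p5 (F : fieldType) (A : algType F) (V W1 : lmodType F)
  (phi : A -> V -> V) (pi1 : A -> W1 -> W1) (S1 : W1 -> V) (T1 : V -> W1) :
  linear_system phi ->
  hom_dilation phi pi1 S1 T1 ->
  lin_minimal pi1 T1 ->
  (no_invariant_in_ker pi1 S1 -> equiv_to_canonical phi pi1 S1 T1) /\
  (finite_dim W1 -> rep_equiv_to_canonical phi pi1 -> no_invariant_in_ker pi1 S1).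
Proof.
move=> _ [[pi_lin _ pi_1 piM] [_ [S_lin _] phi_comp]] T_min; split.
  move=> no_inv; exists (canonical_map pi1 S1); split; first split.
  - exact: canonical_map_linear.
  - exact: canonical_map_in_Wc pi_lin piM S_lin phi_comp T_min.
  - exact: canonical_map_onto pi_lin piM S_lin phi_comp.
  - exact: canonical_map_injective pi_lin pi_1 piM S_lin no_inv.
  - exact: canonical_map_T.
  - exact: canonical_map_S.
  - exact: canonical_map_pi.
move=> W_fin [R [R_bij _]]; apply: (no_invariant_in_ker_of_injective pi_lin S_lin).
apply: (canonical_map_injective_finite_dim pi_lin piM S_lin phi_comp T_min W_fin).
by exists R.
Qed.
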